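(* Let $\mathbb F$ have characteristic $0$ and let $f(\mathbf x)\in\mathbb F^k[\mathbf x]$ be an arity-$n$ polynomial of degree $d$ with coefficients in $\mathbb F^k$. Let $\mathbf w\in\mathbb N^n$ be a basis isolating weight assignment for $f$. Then $f(\mathbf x+t^{\mathbf w}):=f(x_1+t^{w_1},\dots,x_n+t^{w_n})$, viewed as a polynomial in $\mathbf x$ with coefficients in $\mathbb F(t)^k$, has a cone-closed basis over $\mathbb F(t)$.
   Context: For $f\in\mathbb F^k[\mathbf x]$, $\mathrm{coef}_{\mathbf x^{\mathbf e}}(f)\in\mathbb F^k$ is the coefficient vector of monomial $\mathbf x^{\mathbf e}$, and $\mathrm{lrsp}(f)$ is the span of all coefficient vectors. A monomial $\mathbf x^{\mathbf e}$ is a submonomial of $\mathbf x^{\mathbf f}$ if $\mathbf e\le\mathbf f$ coordinatewise; a set of monomials is cone-closed if it contains every submonomial of each of its elements. $f$ has a cone-closed basis if there is a cone-closed set $B$ of monomials whose coefficients form a basis of $\mathrm{lrsp}(f)$. A weight assignment $\mathbf w\in\mathbb N^n$ gives monomial $\mathbf x^{\mathbf e}$ weight $\mathbf w(\mathbf e)=\sum_i e_iw_i$. $\mathbf w$ is basis isolating for $f$ if there is a set of monomials $B$ whose coefficients form a basis of $\mathrm{lrsp}(f)$ such that (1) the monomials in $B$ have pairwise distinct weights, and (2) for every monomial $m$ in the support of $f$ not in $B$, $\mathrm{coef}_m(f)$ lies in the span of $\{\mathrm{coef}_{m'}(f): m'\in B,\ \mathbf w(m')<\mathbf w(m)\}$.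 *)

(* Multivariate polynomials are not in the library, so we
   represent a polynomial in n variables of (individual) exponent <= d with
   coefficients in K^k as a finite function from exponent vectors to row
   vectors 'rV[K]_k. *)
From HB Require Import structures.
From mathcomp Require Import all_boot all_order all_algebra.
Set Implicit Arguments. Unset Strict Implicit. Unset Printing Implicit Defensive.
Import Order.TTheory GRing.Theory Num.Theory.
Local Open Scope ring_scope.

Definition mon (n d : nat) := {ffun 'I_n -> 'I_d.+1}.

Definition mpoly (K : fieldType) (n d k : nat) := {ffun mon n d -> 'rV[K]_k}.

Definition tdeg n d (e : mon n d) : nat := (\sum_(i < n) e i)%N.

(* total degree of a polynomial (0 for the zero polynomial) *)
Definition mdeg K n d k (f : mpoly K n d k) : nat :=
  (\max_(e : mon n d | f e != 0%R) tdeg e)%N.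

Definition submon n d (e e' : mon n d) : bool := [forall i, (e i <= e' i)%N].

Definition cone_closed n d (B : {set mon n d}) : Prop :=
  forall e e', e' \in B -> submon e e' -> e \in B.

Definition lrsp K n d k (f : mpoly K n d k) := (\sum_(e : mon n d) <<f e>>)%MS.

Definition coefmx K n d k (f : mpoly K n d k) (B : {set mon n d}) : 'M[K]_(#|B|, k) :=
  \matrix_(i < #|B|) f (enum_val i).

Definition is_coef_basis K n d k (f : mpoly K n d k) (B : {set mon n d}) : bool :=
  row_free (coefmx f B) && (coefmx f B == lrsp f)%MS.

Definition has_cone_closed_basis K n d k (f : mpoly K n d k) : Prop :=
  exists B : {set mon n d}, cone_closed B /\ is_coef_basis f B.

Definition weight n d (w : 'I_n -> nat) (e : mon n d) : nat :=
  (\sum_(i < n) e i * w i)%N.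

Definition basis_isolating K n d k (w : 'I_n -> nat) (f : mpoly K n d k) : Prop :=
  exists B : {set mon n d},
    [/\ is_coef_basis f B,
        {in B &, injective (weight w)} &
        forall e, f e != 0 -> e \notin B ->
          (f e <= \sum_(e' in B | (weight w e' < weight w e)%N) <<f e'>>)%MS].

Definition ratfun (F : fieldType) := {fraction {poly F}}.

(* f(x + t^w) = sum_e c_e prod_i (x_i + t^{w_i})^{e_i}, expanded binomially:
   coefficient of x^a is sum_{e >= a} c_e prod_i C(e_i,a_i) t^{sum_i w_i (e_i - a_i)},
   viewed in F(t)^k. *)
Definition shift_poly (F : fieldType) n d k (w : 'I_n -> nat) (f : mpoly F n d k)
  : mpoly (ratfun F) n d k :=
  [ffun a : mon n d =>
     \sum_(e : mon n d | submon a e)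
        (tofrac ((\prod_(i < n) 'C(e i, a i))%:R *: 'X^(\sum_(i < n) w i * (e i - a i))))
          *: map_mx (fun c : F => tofrac c%:P) (f e)].

From HB Require Import structures.
From mathcomp Require Import all_boot all_order all_algebra zify.
Import Order.TTheory GRing.Theory Num.Theory.
Local Open Scope ring_scope.
Set Implicit Arguments. Unset Strict Implicit. Unset Printing Implicit Defensive.

(* Let b_1, ..., b_m enumerate the isolating basis B and write the coefficient
   c_e of f as lambda_e * C, where the rows of C are the c_(b_j).  The
   coefficient of x^a in f(x + t^w) is then p_a * C with
   p_a = sum_(e >= a) binom(e, a) t^(w(e - a)) lambda_e.  Basis isolation makes
   lambda_e(j) vanish unless w(b_j) < w(e) or e = b_j, so after scaling rows by
   t^(w(a)) and columns by t^(-w(b_j)), the matrix of the p_a (a in A) becomes a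
   polynomial matrix whose value at t = 0 is (binom(b_j, a))_(a, j).  It thus
   suffices to find a cone-closed A for which the binomial vectors
   v_a = (binom(b_j, a))_j form a basis of F^m.  Take the greedy basis of the
   v_a along a linear extension of the submonomial order: it is cone-closed
   because, in characteristic 0, multiplying by diag(b_j(i)) maps v_a to
   (a_i + 1) v_(a + e_i) + a_i v_a, so v_(a + e_i) depends on earlier vectors
   whenever v_a does. *)

Lemma sum_digits_inj b N (c c' : 'I_N -> nat) :
  (forall k, c k < b)%N -> (forall k, c' k < b)%N ->
  (\sum_(k < N) c k * b ^ k = \sum_(k < N) c' k * b ^ k)%N -> c =1 c'.
Proof.
elim: N c c' => [|N IH] c c' hc hc'; first by move=> _ [].
have b_gt0 : (0 < b)%N by have := hc ord0; lia.
have shift (x : 'I_N.+1 -> nat) : (\sum_(k < N.+1) x k * b ^ k =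
    x ord0 + b * \sum_(k < N) x (lift ord0 k) * b ^ k)%N.
  rewrite big_ord_recl expn0 muln1 big_distrr; congr (_ + _)%N.
  by apply: eq_bigr => k _; rewrite /bump /= expnS mulnCA.
rewrite !shift => E.
have c0 : c ord0 = c' ord0.
  have := congr1 (modn^~ b) E.
  by rewrite ![(b * _)%N]mulnC ![(c _ + _)%N]addnC ![(c' _ + _)%N]addnC !modnMDl !modn_small.
move: E; rewrite c0 => /addnI /eqP; rewrite eqn_mul2l (gtn_eqF b_gt0) => /eqP E.
have {}IH := IH _ _ (fun k => hc (lift ord0 k)) (fun k => hc' (lift ord0 k)) E.
by move=> k; case: (unliftP ord0 k) => [j ->|->]; [exact: IH|exact: c0].
Qed.

Lemma mxrank_adds_notin (K : fieldType) p m (v : 'rV[K]_p) (S : 'M[K]_(m, p)) :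
  ~~ (v <= S)%MS -> \rank (v + S)%MS = (\rank S).+1.
Proof.
move=> vS; apply/eqP; rewrite eqn_leq; apply/andP; split.
  apply: leq_trans (mxrank_adds_leqif v S).1 _.
  by have := rank_leq_row v; lia.
have : (S < v + S)%MS.
  by rewrite ltmxE addsmxSr; apply: contra vS => /(submx_trans (addsmxSl v S)).
by move/rank_ltmx.
Qed.

Lemma enum_rows_eqmx (K : fieldType) (T : finType) p (v : T -> 'rV[K]_p)
    (X : {set T}) :
  (\matrix_(i < #|X|) v (enum_val i) == \sum_(a in X) <<v a>>)%MS.
Proof.
apply/andP; split.
  apply/row_subP => i; rewrite rowK (sumsmx_sup (enum_val i)) ?enum_valP //.
  by rewrite genmxE.
apply/sumsmx_subP => a aX; rewrite genmxE.
by apply: (eq_row_sub (enum_rank_in aX a)); rewrite rowK enum_rankK_in.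
Qed.

Section GreedyBasis.
Variables (K : fieldType) (T : finType) (p : nat) (v : T -> 'rV[K]_p).
Variable code : T -> nat.
Hypothesis code_inj : injective code.

Definition span_below r := (\sum_(c | (code c < r)%N) <<v c>>)%MS.

Definition greedy_basis : {set T} := [set a | ~~ (v a <= span_below (code a))%MS].

Lemma span_below_mono r1 r2 : (r1 <= r2)%N -> (span_below r1 <= span_below r2)%MS.
Proof.
move=> r12; apply/sumsmx_subP => c cr.
by apply: (sumsmx_sup c); [exact: leq_trans r12|exact: submx_refl].
Qed.

Lemma sub_span_below c r : (code c < r)%N -> (v c <= span_below r)%MS.
Proof. by move=> cr; apply: (sumsmx_sup c) => //; rewrite genmxE. Qed.

Lemma span_below_greedy r :
  (span_below r <= \sum_(a in greedy_basis) <<v a>>)%MS.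
Proof.
elim: r => [|r IH]; first by apply/sumsmx_subP.
apply/sumsmx_subP => c; rewrite ltnS leq_eqVlt => /orP[/eqP cr|cr]; last first.
  by apply: submx_trans IH; rewrite genmxE sub_span_below.
rewrite genmxE; have [cG|] := boolP (c \in greedy_basis).
  by apply: (sumsmx_sup c) => //; rewrite genmxE.
by rewrite inE negbK cr => /submx_trans; apply.
Qed.

Definition greedy_below r := [set a in greedy_basis | code a < r]%N.

Lemma mxrank_greedy_below r :
  \rank (\sum_(a in greedy_below r) <<v a>>)%MS = #|greedy_below r|.
Proof.
elim: r => [|r IH].
  by rewrite big_pred0 ?mxrank0 ?eq_card0 // => a; rewrite inE ltn0 andbF.
case: (pickP [pred c in greedy_basis | code c == r]) => [c /andP[cG /eqP cr]|none].
  have below_succ : greedy_below r.+1 = c |: greedy_below r.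
    apply/setP => a; rewrite !inE ltnS leq_eqVlt -cr.
    have [->|ac] := eqVneq a c; first by move: cG; rewrite inE eqxx => ->.
    by rewrite (inj_eq code_inj) (negbTE ac).
  have cNbelow : c \notin greedy_below r by rewrite inE cr ltnn andbF.
  rewrite below_succ cardsU1 cNbelow (big_setU1 _ cNbelow) /= add1n -IH.
  rewrite (adds_eqmx (genmxE _) (eqmx_refl _)) mxrank_adds_notin //.
  move: cG; rewrite inE cr; apply: contra => /submx_trans; apply.
  by apply/sumsmx_subP => a; rewrite inE genmxE => /andP[_ /sub_span_below].
have -> // : greedy_below r.+1 = greedy_below r.
apply/setP => a; rewrite !inE ltnS leq_eqVlt.
by have := none a; rewrite /= inE andb_orr => ->.
Qed.

Lemma greedy_basisP :
  let M := \matrix_(i < #|greedy_basis|) v (enum_val i) in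
  row_free M /\ (M == \sum_a <<v a>>)%MS.
Proof.
move=> M; pose r := (\max_a code a).+1.
have all_below a : (code a < r)%N by rewrite ltnS leq_bigmax.
have below_all : greedy_below r = greedy_basis.
  by apply/setP => a; rewrite inE all_below andbT.
have span_all : span_below r = (\sum_a <<v a>>)%MS.
  by apply: eq_bigl => a; rewrite all_below.
have MG := enum_rows_eqmx v greedy_basis; split.
  by rewrite /row_free (eqmxP MG) -below_all mxrank_greedy_below.
apply/eqmxP; apply: eqmx_trans (eqmxP MG) _; apply/eqmxP/andP; split.
  by apply/sumsmx_subP => a _; apply: (sumsmx_sup a).
by rewrite -span_all span_below_greedy.
Qed.

End GreedyBasis.

Section Monomials.
Variables n d : nat.
Implicit Types (a e : mon n d) (i k : 'I_n).

Lemma submonP a e : reflect (forall k, a k <= e k)%N (submon a e).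
Proof. exact: forallP. Qed.

Lemma mon_neq a e : a != e -> exists k, a k != e k.
Proof.
move=> ae; apply/existsP; apply: contraR ae => /existsPn same.
by apply/eqP/ffunP => k; apply/eqP; have := same k; rewrite negbK.
Qed.

Definition mon_code a : nat := (\sum_(k < n) a k * d.+1 ^ k)%N.

Lemma mon_code_inj : injective mon_code.
Proof.
move=> a e /sum_digits_inj ae; apply/ffunP => k; apply: val_inj.
by apply: ae => j; apply: ltn_ord.
Qed.

Lemma mon_code_lt a e : submon a e -> a != e -> (mon_code a < mon_code e)%N.
Proof.
move=> /submonP ae /mon_neq[k ak].
rewrite /mon_code (bigD1 k) // [X in (_ < X)%N](bigD1 k) //= -addSn.
apply: leq_add; first by rewrite ltn_pmul2r ?expn_gt0 // ltn_neqAle ak ae.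
by apply: leq_sum => j _; rewrite leq_mul2r ae orbT.
Qed.

Definition mon_incr a i : mon n d :=
  [ffun k => if k == i then inord (a i).+1 else a k].

Lemma mon_incr_id a i : (a i < d)%N -> mon_incr a i i = (a i).+1 :> nat.
Proof. by move=> aid; rewrite ffunE eqxx inordK. Qed.

Lemma mon_incr_neq a i k : k != i -> mon_incr a i k = a k.
Proof. by move=> ki; rewrite ffunE (negbTE ki). Qed.

Lemma mon_code_incr a i :
  (a i < d)%N -> mon_code (mon_incr a i) = (mon_code a + d.+1 ^ i)%N.
Proof.
move=> aid; rewrite /mon_code (bigD1 i) // [in RHS](bigD1 i) //= mon_incr_id //.
rewrite (eq_bigr (fun k => a k * d.+1 ^ k)%N) => [|k ki]; last by rewrite mon_incr_neq.
by rewrite mulSn; lia.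
Qed.

Definition mbinom (e a : mon n d) : nat := (\prod_(k < n) 'C(e k, a k))%N.

Lemma mbinom_small e a k : (e k < a k)%N -> mbinom e a = 0%N.
Proof. by move=> eak; rewrite /mbinom (bigD1 k) //= bin_small. Qed.

Lemma mbinom_submon e a : mbinom e a != 0%N -> submon a e.
Proof.
move=> ea; apply/submonP => k; rewrite leqNgt; apply: contra ea => eak.
by rewrite (mbinom_small eak).
Qed.

Lemma mbinomm e : mbinom e e = 1%N.
Proof. by rewrite /mbinom big1 // => k _; rewrite binn. Qed.

Lemma mbinom_incr e a i : (a i < d)%N ->
  ((a i).+1 * mbinom e (mon_incr a i) = (e i - a i) * mbinom e a)%N.
Proof.
move=> aid; rewrite /mbinom (bigD1 i) // [in RHS](bigD1 i) //= mon_incr_id //.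
rewrite (eq_bigr (fun k => 'C(e k, a k))) => [|k ki]; last by rewrite mon_incr_neq.
by rewrite mulnA mul_bin_left mulnA.
Qed.

End Monomials.

Section BinomialVectors.
Variables (F : fieldType) (n d m : nat) (b : 'I_m -> mon n d).
Hypothesis F_char0 : [pchar F] =i pred0.
Implicit Types (a e : mon n d) (i : 'I_n).

Definition binvec a : 'rV[F]_m := \row_j (mbinom (b j) a)%:R.

Definition exponent_mx i : 'M[F]_m := diag_mx (\row_j (b j i : nat)%:R).

Lemma binvec_exponent_mx a i : (a i < d)%N ->
  binvec a *m exponent_mx i = (a i).+1%:R *: binvec (mon_incr a i) + (a i)%:R *: binvec a.
Proof.
move=> aid; apply/rowP => j; rewrite mul_mx_diag !mxE -!natrM -natrD mbinom_incr //.
have [bja|/mbinom_small ->] := leqP (a i) (b j i); last by rewrite !muln0.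
by rewrite -mulnDl subnK // mulnC.
Qed.

Lemma binvec_exponent_mx_top a i : a i = d :> nat ->
  binvec a *m exponent_mx i = (a i)%:R *: binvec a.
Proof.
move=> aid; apply/rowP => j; rewrite mul_mx_diag !mxE.
have [/mbinom_small ->|bja] := ltnP (b j i) (a i); first by rewrite !mul0r mulr0.
have -> : (b j i : nat) = a i by apply/eqP; rewrite eqn_leq bja aid -ltnS andbT.
by rewrite mulrC.
Qed.

Local Notation below := (span_below binvec (@mon_code n d)).

Lemma span_below_exponent_mx r i :
  (below r *m exponent_mx i <= below (r + d.+1 ^ i))%MS.
Proof.
rewrite sumsmxMr; apply/sumsmx_subP => c cr; rewrite (eqmxMr _ (genmxE _)).
have: (c i <= d)%N by rewrite -ltnS.
rewrite leq_eqVlt => /orP[/eqP cid|cid].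
  by rewrite binvec_exponent_mx_top // scalemx_sub // sub_span_below // ltn_addr.
rewrite binvec_exponent_mx // addmx_sub // scalemx_sub // sub_span_below //.
  by rewrite mon_code_incr // ltn_add2r.
exact: ltn_addr.
Qed.

Lemma binvec_incr_below a i : (a i < d)%N ->
  (binvec a <= below (mon_code a))%MS ->
  (binvec (mon_incr a i) <= below (mon_code (mon_incr a i)))%MS.
Proof.
move=> aid aS; rewrite mon_code_incr //.
have aS' : (binvec a <= below (mon_code a + d.+1 ^ i))%MS.
  by apply: submx_trans aS (span_below_mono _ _ _); rewrite leq_addr.
have unit_ai : (a i).+1%:R != 0 :> F by move/pcharf0P: F_char0 => ->.
rewrite -[binvec _](scalerK unit_ai) scalemx_sub //.
rewrite -[_ *: binvec _](addrK ((a i)%:R *: binvec a)) -binvec_exponent_mx //.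
rewrite addmx_sub ?eqmx_opp ?scalemx_sub //.
exact: submx_trans (submxMr _ aS) (span_below_exponent_mx _ _).
Qed.

Lemma binvec_submon_below a e : submon a e ->
  (binvec a <= below (mon_code a))%MS -> (binvec e <= below (mon_code e))%MS.
Proof.
move=> ae; have [N] := ubnP (mon_code e - mon_code a)%N.
elim: N a ae => // N IH a ae /ltnSE size_ae.
have [<-//|ane] := eqVneq a e; have [i ai] := mon_neq ane.
have aei : (a i < e i)%N by rewrite ltn_neqAle ai (submonP _ _ ae).
have aid : (a i < d)%N by apply: leq_trans aei _; rewrite -ltnS.
have incr_e : submon (mon_incr a i) e.
  apply/submonP => k; have [->|ki] := eqVneq k i; first by rewrite mon_incr_id.
  by rewrite mon_incr_neq // (submonP _ _ ae).
move=> /(binvec_incr_below aid); apply: IH => //.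
have := mon_code_lt ae ane; have := mon_code_lt incr_e.
rewrite mon_code_incr //; have := expn_gt0 d.+1 i.
by case: eqP => [->|_ _]; rewrite ?subnn; lia.
Qed.

Lemma greedy_binvec_cone_closed : cone_closed (greedy_basis binvec (@mon_code n d)).
Proof.
move=> a e; rewrite !inE => eG ae; apply: contra eG.
exact: binvec_submon_below.
Qed.

Hypothesis b_inj : injective b.

(* The matrix (binom(b_l, b_j))_(j, l) is unitriangular along [mon_code]. *)
Lemma binvec_span_full : \rank (\sum_a <<binvec a>>)%MS = m.
Proof.
set S := (\sum_a <<binvec a>>)%MS; pose top := (\max_(a : mon n d) mon_code a)%N.
suff unitS (j : 'I_m) : ((delta_mx 0 j : 'rV_m) <= S)%MS.
  apply/eqP; rewrite eqn_leq rank_leq_col -{1}(mxrank1 F m) mxrankS //.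
  by apply/row_subP => j; rewrite row1.
have [N] := ubnP (top - mon_code (b j))%N; elim: N j => // N IH j /ltnSE Nj.
have -> : 'e_j = binvec (b j) - \sum_(l | l != j) binvec (b j) 0 l *: 'e_l.
  by rewrite {1}(row_sum_delta (binvec (b j))) (bigD1 j) //= mxE mbinomm scale1r addrK.
rewrite addmx_sub ?eqmx_opp ?summx_sub ?(sumsmx_sup (b j)) ?genmxE // => l lj.
rewrite mxE; have [->|/mbinom_submon bjl] := eqVneq (mbinom (b l) (b j)) 0%N.
  by rewrite scale0r sub0mx.
rewrite scalemx_sub // IH //.
have := mon_code_lt bjl; rewrite (inj_eq b_inj) eq_sym lj => /(_ isT).
by have := leq_bigmax (F := @mon_code n d) (b l); rewrite -/top; lia.
Qed.

Lemma binvec_cone_basis : exists A : {set mon n d},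
  [/\ cone_closed A, #|A| = m & row_free (\matrix_(i < #|A|) binvec (enum_val i))].
Proof.
have [free span] := greedy_basisP binvec (@mon_code_inj n d).
exists (greedy_basis binvec (@mon_code n d)); split=> //.
  exact: greedy_binvec_cone_closed.
by move: free; rewrite /row_free (eqmxP span) binvec_span_full => /eqP.
Qed.

End BinomialVectors.

Lemma det_neq0_horner0 (R : idomainType) m (Q : 'M[{poly R}]_m) :
  \det (map_mx (horner_eval 0) Q) != 0 -> \det Q != 0.
Proof. by apply: contraNneq => Q0; rewrite det_map_mx Q0 rmorph0. Qed.

Lemma diag_mx_unit (K : fieldType) m (x : 'rV[K]_m) :
  (forall i, x 0 i != 0) -> diag_mx x \in unitmx.
Proof. by move=> x0; rewrite unitmxE det_diag unitfE; apply/prodf_neq0. Qed.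

Section ShiftedPolynomial.
Variables (F : fieldType) (n d k : nat) (f : mpoly F n d k) (w : 'I_n -> nat).
Variable B : {set mon n d}.
Hypothesis basis_B : is_coef_basis f B.
Hypothesis isolating_B : forall e, f e != 0 -> e \notin B ->
  (f e <= \sum_(e' in B | (weight w e' < weight w e)%N) <<f e'>>)%MS.
Implicit Types (a e : mon n d).

Local Notation m := #|B|.
Local Notation C := (coefmx f B).
Local Notation b := (@enum_val _ (mem B)).

Lemma coefmx_free : row_free C. Proof. by case/andP: basis_B. Qed.

Definition coord e : 'rV[F]_m := f e *m pinvmx C.

Lemma coordK e : coord e *m C = f e.
Proof.
apply: mulmxKpV; case/andP: basis_B => _ /eqmxP ->.
by rewrite (sumsmx_sup e) ?genmxE.
Qed.

Lemma coord_basis j : coord (b j) = 'e_j.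
Proof. by apply: (row_free_inj coefmx_free); rewrite /= coordK -rowE rowK. Qed.

Lemma coord_weight_lt e j : e != b j -> coord e 0 j != 0 ->
  (weight w (b j) < weight w e)%N.
Proof.
move=> ej; have [eB|eNB] := boolP (e \in B).
  have := coord_basis (enum_rank_in eB e); rewrite enum_rankK_in // => ->.
  have [je|jNe] := eqVneq j (enum_rank_in eB e).
    by move: ej; rewrite je enum_rankK_in ?eqxx.
  by rewrite mxE (negbTE jNe) andbF eqxx.
have [fe0|fe0] := eqVneq (f e) 0; first by rewrite /coord fe0 mul0mx mxE eqxx.
pose D := diag_mx (\row_l ((weight w (b l) < weight w e)%N%:R : F)) : 'M_m.
have : (f e <= D *m C)%MS.
  apply: submx_trans (isolating_B fe0 eNB) _; apply/sumsmx_subP => e' /andP[e'B lt_e'].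
  rewrite genmxE; apply: (eq_row_sub (enum_rank_in e'B e')).
  rewrite row_mul row_diag_mx -scalemxAl -rowE rowK mxE enum_rankK_in //.
  by rewrite lt_e' scale1r.
case/submxP=> u fe; have -> : coord e = u *m D.
  by apply: (row_free_inj coefmx_free); rewrite /= coordK fe mulmxA.
by rewrite mul_mx_diag !mxE; case: ltnP; rewrite ?mulr0 ?eqxx.
Qed.

Local Notation frac := (@tofrac {poly F}).

Definition const_frac : {rmorphism F -> ratfun F} := frac \o polyC.

Definition shift_exp a e : nat := (\sum_(i < n) w i * (e i - a i))%N.

Definition shift_coord a : 'rV[ratfun F]_m :=
  \sum_(e | submon a e)
    frac ((mbinom e a)%:R *: 'X^(shift_exp a e)) *: map_mx const_frac (coord e).

Lemma shift_polyE a : shift_poly w f a = shift_coord a *m map_mx const_frac C.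
Proof.
rewrite /shift_poly ffunE /shift_coord mulmx_suml; apply: eq_bigr => e _.
by rewrite -scalemxAl -map_mxM coordK.
Qed.

Lemma weight_shift a e : submon a e ->
  (weight w a + shift_exp a e = weight w e)%N.
Proof.
move=> /submonP ae; rewrite /weight /shift_exp -big_split; apply: eq_bigr => i _.
by rewrite /= [(w i * _)%N]mulnC -mulnDl subnKC.
Qed.

Lemma shift_coordE a j : shift_coord a 0 j =
  frac (\sum_(e | submon a e) (mbinom e a)%:R *: 'X^(shift_exp a e) * (coord e 0 j)%:P).
Proof.
by rewrite rmorph_sum summxE; apply: eq_bigr => e _; rewrite !mxE rmorphM.
Qed.

Section ShiftedRows.
Variable A : {set mon n d}.
Hypothesis A_card : #|A| = m.
Hypothesis A_free : row_free (\matrix_(i < #|A|) binvec F b (enum_val i)).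

Local Notation alpha i := (enum_val (cast_ord (esym A_card) i)).

Definition binmx : 'M[F]_m := \matrix_(i, j) (mbinom (b j) (alpha i))%:R.

Lemma binmx_unit : binmx \in unitmx.
Proof.
have -> : binmx = castmx (A_card, erefl m) (\matrix_(i < #|A|) binvec F b (enum_val i)).
  by apply/matrixP => i j; rewrite castmxE !mxE cast_ord_id.
by rewrite -row_free_unit row_free_castmx.
Qed.

Definition shift_polymx : 'M[{poly F}]_m := \matrix_(i, j)
  \sum_(e | submon (alpha i) e)
    ((mbinom e (alpha i))%:R * coord e 0 j) *: 'X^(weight w e - weight w (b j)).

Lemma shift_polymx_at0 : map_mx (horner_eval 0) shift_polymx = binmx.
Proof.
apply/matrixP => i j; rewrite !mxE rmorph_sum /=.
have at0 e : horner_eval 0 (((mbinom e (alpha i))%:R * coord e 0 j) *: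
    'X^(weight w e - weight w (b j))) = (e == b j)%:R * (mbinom (b j) (alpha i))%:R.
  rewrite horner_evalE hornerZ hornerXn expr0n.
  have [->|ej] := eqVneq e (b j).
    by rewrite coord_basis mxE !eqxx subnn !mulr1 mul1r.
  have [->|c0] := eqVneq (coord e 0 j) 0; first by rewrite mulr0 !mul0r.
  by rewrite subn_eq0 leqNgt coord_weight_lt // !mulr0 mul0r.
rewrite (eq_bigr _ (fun e _ => at0 e)).
have [ab|aNb] := boolP (submon (alpha i) (b j)).
  rewrite (bigD1 (b j)) //= eqxx mul1r big1 ?addr0 // => e /andP[_ /negbTE ->].
  by rewrite mul0r.
rewrite big1 => [|e ae]; last first.
  have [eb|_] := eqVneq e (b j); last by rewrite mul0r.
  by move: ae; rewrite eb (negbTE aNb).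
by have [->//|/mbinom_submon] := eqVneq (mbinom (b j) (alpha i)) 0%N; rewrite (negbTE aNb).
Qed.

Definition shift_coordmx : 'M[ratfun F]_m := \matrix_(i, j) shift_coord (alpha i) 0 j.

Lemma shift_coordmx_scaled :
  diag_mx (\row_i frac 'X^(weight w (alpha i))) *m shift_coordmx =
  map_mx frac shift_polymx *m diag_mx (\row_j frac 'X^(weight w (b j))).
Proof.
apply/matrixP => i j; rewrite mul_diag_mx mul_mx_diag !mxE shift_coordE -!rmorphM.
congr frac; rewrite mulr_sumr mulr_suml; apply: eq_bigr => e ae.
have [->|c0] := eqVneq (coord e 0 j) 0; first by rewrite !(mulr0, scale0r, mul0r).
have le_je : (weight w (b j) <= weight w e)%N.
  have [->//|ej] := eqVneq e (b j); exact/ltnW/coord_weight_lt.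
rewrite -!mul_polyC polyCM -!mulrA -exprD subnK // -(weight_shift ae) exprD.
by rewrite mulrCA [(coord e 0 j)%:P * _]mulrC !mulrA.
Qed.

Lemma shift_coordmx_unit : shift_coordmx \in unitmx.
Proof.
have X_neq0 (r : nat) : frac 'X^r != 0 by rewrite tofrac_eq0 expf_neq0 ?polyX_eq0.
have := unitmx_mul (diag_mx (\row_i frac 'X^(weight w (alpha i)))) shift_coordmx.
rewrite diag_mx_unit => [/= <-|i]; last by rewrite mxE X_neq0.
rewrite shift_coordmx_scaled unitmx_mul diag_mx_unit => [|j]; last by rewrite mxE X_neq0.
rewrite andbT unitmxE det_map_mx unitfE tofrac_eq0 det_neq0_horner0 //.
by rewrite shift_polymx_at0 -unitfE -unitmxE binmx_unit.
Qed.

Lemma shift_coef_free : row_free (coefmx (shift_poly w f) A).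
Proof.
have -> : coefmx (shift_poly w f) A =
    castmx (esym A_card, erefl k) (shift_coordmx *m map_mx const_frac C).
  apply/matrixP => i j; rewrite castmxE !mxE shift_polyE !mxE.
  by apply: eq_bigr => l _; rewrite !mxE cast_ord_id cast_ordKV.
rewrite row_free_castmx /row_free mxrankMfree ?mxrank_unit ?shift_coordmx_unit //.
by rewrite /row_free mxrank_map; exact: coefmx_free.
Qed.

Lemma shift_coef_basis : is_coef_basis (shift_poly w f) A.
Proof.
rewrite /is_coef_basis shift_coef_free.
have sub_lrsp : (coefmx (shift_poly w f) A <= lrsp (shift_poly w f))%MS.
  by apply/row_subP => i; rewrite rowK (sumsmx_sup (enum_val i)) ?genmxE.
have lrsp_sub : (lrsp (shift_poly w f) <= map_mx const_frac C)%MS.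
  by apply/sumsmx_subP => a _; rewrite genmxE shift_polyE submxMl.
rewrite -(mxrank_leqif_eq sub_lrsp).2 eqn_leq (mxrankS sub_lrsp).
rewrite (eqP shift_coef_free) A_card; apply: leq_trans (mxrankS lrsp_sub) _.
by rewrite mxrank_map rank_leq_row.
Qed.

End ShiftedRows.

Hypothesis F_char0 : [pchar F] =i pred0.

Lemma shift_poly_cone_closed_basis : has_cone_closed_basis (shift_poly w f).
Proof.
have [A [A_cone A_card A_free]] := binvec_cone_basis F_char0 (@enum_val_inj _ (mem B)).
by exists A; split; last exact: shift_coef_basis A_free.
Qed.

End ShiftedPolynomial.

Unset Implicit Arguments.

Theorem theorem5 (F : fieldType) (n d k : nat) (f : mpoly F n d k)
  (w : 'I_n -> nat) :
  [pchar F] =i pred0 ->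
  mdeg f = d ->
  basis_isolating w f ->
  has_cone_closed_basis (shift_poly w f).
Proof.
move=> F_char0 _ [B [basis_B _ isolating_B]].
exact: shift_poly_cone_closed_basis basis_B isolating_B F_char0.
Qed.
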